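(* Let $G=(U\cup W,E)$ be a finite bipartite graph with bipartition $(U,W)$. For every $\mathbf{I}\in\{0,1\}^{\vec E}$ with $\mathbf{I}=\mathcal{P}_G(\mathcal{P}_G(\mathbf{I}))$, the set $V(\mathbf{I})$ is a vertex cover of $G$.
   Context: $\vec E$: directed edges; $\partial v$: neighbours of $v$; empty sums are $0$. $\mathcal{P}_G:\{0,1\}^{\vec E}\to\{0,1\}^{\vec E}$, $\mathcal{P}_G(\mathbf{I})_{u\to v}=\mathbf{1}(\sum_{w\in\partial u\setminus v}I_{w\to u}=0)$. $V(\mathbf{I})$: for $u\in U$, $u\in V(\mathbf{I})$ iff $\sum_{v\in\partial u}I_{v\to u}\ge1$; for $w\in W$, $w\in V(\mathbf{I})$ iff $\sum_{v\in\partial w}\mathcal{P}_G(\mathbf{I})_{v\to w}\ge2$. *)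

From mathcomp Require Import all_boot.
Set Implicit Arguments. Unset Strict Implicit. Unset Printing Implicit Defensive.

Section BP.
Variables (T : finType) (e : rel T).

Definition dedge := {x : T * T | e x.1 x.2}.

Definition config := dedge -> bool.

(* I_{w->u}, read as a 0/1 value; 0 if (w,u) is not an edge (never used) *)
Definition ival (I : config) (w u : T) : nat :=
  match insub (w, u) with Some d => nat_of_bool (I d) | None => 0 end.

Definition PG (I : config) : config :=
  fun d => \sum_(w | e (val d).1 w && (w != (val d).2)) ival I w (val d).1 == 0.

Definition VI (U : {set T}) (I : config) : {set T} :=
  [set x | if x \in U then 1 <= \sum_(v | e x v) ival I v x
           else 2 <= \sum_(v | e x v) ival (PG I) v x].

Definition vertex_cover (C : {set T}) :=
  forall x y, e x y -> (x \in C) || (y \in C).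

Definition simple_graph := symmetric e /\ irreflexive e.
Definition bipartition (U : {set T}) :=
  forall x y, e x y -> (x \in U) != (y \in U).
End BP.

From mathcomp Require Import all_boot.

(* Let x - y be an edge with x in U and y in W, and suppose
   x is not in V(I), i.e. every incoming message I_{v->x} is 0.
   - Since all messages into x vanish, the outgoing message P(I)_{x->y}
     is 1.
   - In particular I_{y->x} = 0; as I = P(P(I)), this says that the sum of
     P(I)_{w->y} over w in dy \ x is nonzero, so some neighbour w <> x of y
     sends P(I)_{w->y} = 1.
   Hence y receives two nonzero P(I)-messages (from x and from w), so
   y is in V(I). *)

Section Messages.
Context {T : finType} {e : rel T}.
Implicit Types (I J : config e) (u v w x y : T).

Lemma ivalE I {v x} (evx : e v x) : ival I v x = I (exist _ (v, x) evx).
Proof. by rewrite /ival (@insubT _ (fun p : T * T => e p.1 p.2) _ (v, x) evx). Qed.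

Lemma sum_nat_eq0P (A : finType) (P : pred A) (F : A -> nat) :
  reflect (forall i, P i -> F i = 0) (\sum_(i | P i) F i == 0).
Proof.
rewrite sum_nat_eq0; apply: (iffP forallP) => H i.
  by move=> Pi; move: (H i); rewrite Pi => /eqP.
by apply/implyP => /H ->.
Qed.

Lemma PG_silent_sender I u v : e u v ->
  (forall w, e u w -> ival I w u = 0) -> ival (PG I) u v = 1.
Proof.
move=> euv silent; rewrite (ivalE (PG I) euv) /PG /=.
suff /eqP -> : \sum_(w | e u w && (w != v)) ival I w u == 0 by [].
by apply/sum_nat_eq0P => w /andP [euw _]; apply: silent.
Qed.

Lemma fixpoint_zero_message {I x y} : (forall d, I d = PG (PG I) d) ->
  e y x -> ival I y x = 0 ->
  exists2 w, e y w && (w != x) & ival (PG I) w y != 0.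
Proof.
move=> fixI eyx; rewrite (ivalE I eyx) fixI /PG /=.
case: eqP => //= /eqP sum_nz _.
apply/exists_inP; apply: contraR sum_nz => /exists_inPn none.
by apply/sum_nat_eq0P => w /none /negPn /eqP.
Qed.

Lemma two_incoming {J y a b} : a != b -> e y a -> e y b ->
  ival J a y != 0 -> ival J b y != 0 -> 2 <= \sum_(v | e y v) ival J v y.
Proof.
move=> ab eya eyb; rewrite -!lt0n => Ja Jb.
rewrite (bigD1 a) //= (bigD1 b) /=; last by rewrite eyb eq_sym.
by rewrite addnA (leq_trans _ (leq_addr _ _)) // -(addn1 1) leq_add.
Qed.

End Messages.

Lemma edge_covered (T : finType) (e : rel T) (U : {set T}) (I : config e) :
  symmetric e -> (forall d, I d = PG (PG I) d) ->
  forall x y, e x y -> x \in U -> y \notin U ->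
  (x \in VI U I) || (y \in VI U I).
Proof.
move=> sym fixI x y exy xU yU.
rewrite !inE xU (negbTE yU) lt0n.
case: (sum_nat_eq0P _ _) => [silent | //] /=.
have eyx : e y x by rewrite sym.
have [w /andP [eyw wx] PIw] := fixpoint_zero_message fixI eyx (silent y exy).
have PIx : ival (PG I) x y = 1 by exact: PG_silent_sender.
by apply: (two_incoming _ eyx eyw); rewrite ?PIx // eq_sym.
Qed.

Theorem mainTheorem16 (T : finType) (e : rel T) (U : {set T}) :
  simple_graph e -> bipartition e U ->
  forall I : config e, (forall d, I d = PG (PG I) d) ->
  vertex_cover e (VI U I).
Proof.
move=> [sym _] bip I fixI x y exy.
have eyx : e y x by rewrite sym.
move: (bip x y exy); case xU: (x \in U); case yU: (y \in U) => //= _.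
  by apply: edge_covered; rewrite ?yU.
by rewrite orbC; apply: edge_covered; rewrite ?xU.
Qed.
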